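(* Let $p(z)=z^n+a_nz^{n-1}+\cdots+a_2z+a_1$ be a complex monic polynomial with $n\geq2$ and $a_1\neq0$. If $z\in\mathbb{C}$ is any zero of $p$, then $$|z|\leq\left\{\frac{1}{4}\left(\frac{\delta+1+\sqrt{(\delta-1)^2+4\delta'}}{2}\right)+\frac{3}{4}\left(\frac{1}{2}\left(\delta_1+\delta+\sqrt{(\delta_1-\delta)^2+4\delta_2}\right)+1\right)^{1/2}\right\}^{1/4}.$$
   Context: Let $C_p$ be the $n\times n$ matrix whose first row is $(-a_n,-a_{n-1},\dots,-a_2,-a_1)$, whose entries $(k+1,k)$ equal $1$ for $k=1,\dots,n-1$, and whose other entries are $0$. Define numbers $b_j,c_j,d_j$ ($j=1,\dots,n$) by: the first row of $C_p^2$ is $(b_n,b_{n-1},\dots,b_1)$, the first row of $C_p^3$ is $(c_n,\dots,c_1)$, the first row of $C_p^4$ is $(d_n,\dots,d_1)$ (so $b_j=a_na_j-a_{j-1}$, $c_j=-a_nb_j+a_{n-1}a_j-a_{j-2}$ with $a_0=a_{-1}=0$). Set $\alpha=\sum_{j=1}^n|a_j|^2$, $\beta=\sum_{j=1}^n|b_j|^2$, $\gamma=-\sum_{j=1}^n b_j\overline{a_j}$, $\delta=\frac{1}{2}\left(\alpha+\beta+\sqrt{(\alpha-\beta)^2+4|\gamma|^2}\right)$; $\alpha'=\sum_{j=3}^n|a_j|^2$, $\beta'=\sum_{j=3}^n|b_j|^2$, $\gamma'=-\sum_{j=3}^n\overline{a_j}b_j$, $\delta'=\frac12\left(\alpha'+\beta'+\sqrt{(\alpha'-\beta')^2+4|\gamma'|^2}\right)$;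 $\alpha_1=\sum_{j=1}^n|d_j|^2$, $\beta_1=\sum_{j=1}^n|c_j|^2$, $\gamma_1=\sum_{j=1}^n d_j\overline{c_j}$, $\delta_1=\frac12\left(\alpha_1+\beta_1+\sqrt{(\alpha_1-\beta_1)^2+4|\gamma_1|^2}\right)$; $\gamma_2=\sum_{j=1}^n d_j\overline{b_j}$, $\gamma_3=\sum_{j=1}^n d_j\overline{a_j}$, $\gamma_4=\sum_{j=1}^n c_j\overline{b_j}$, $\gamma_5=\sum_{j=1}^n c_j\overline{a_j}$, and $\delta_2=\frac12\Big(|\gamma_2|^2+|\gamma_3|^2+|\gamma_4|^2+|\gamma_5|^2+\sqrt{\big((|\gamma_2|^2+|\gamma_3|^2)-(|\gamma_4|^2+|\gamma_5|^2)\big)^2+4|\gamma_2\overline{\gamma_4}+\gamma_3\overline{\gamma_5}|^2}\Big)$. *)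

From HB Require Import structures.
From mathcomp Require Import all_boot all_order all_algebra.
From mathcomp Require Import complex.
Set Implicit Arguments. Unset Strict Implicit. Unset Printing Implicit Defensive.
Import Order.TTheory GRing.Theory Num.Theory.
Local Open Scope ring_scope.

Section Defs.
Variable R : rcfType.
Local Notation C := R[i].

Definition cabs (z : C) : R := Normc.normc z.
Definition cconj (z : C) : C := conjc z.

(* entry (i,j) (0-based, as natural numbers) of an n x n matrix; 0 out of range *)
Definition ent (n : nat) (M : 'M[C]_n) (i j : nat) : C :=
  match (insub i : option 'I_n), (insub j : option 'I_n) with
  | Some k, Some l => M k l
  | _, _ => 0
  end.

(* the companion matrix C_p: first row (-a_n, ..., -a_1), subdiagonal ones *)
Definition compmx (n : nat) (a : nat -> C) : 'M[C]_n :=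
  \matrix_(i < n, j < n)
     (if val i == 0%N then - a (n - val j)%N
      else if val i == (val j).+1 then 1 else 0).

Definition mpow2 n (a : nat -> C) := compmx n a *m compmx n a.
Definition mpow3 n (a : nat -> C) := mpow2 n a *m compmx n a.
Definition mpow4 n (a : nat -> C) := mpow3 n a *m compmx n a.

(* first row of C_p^2 is (b_n, ..., b_1), so b_j sits in column n - j *)
Definition bco n a (j : nat) : C := ent (mpow2 n a) 0 (n - j).
Definition cco n a (j : nat) : C := ent (mpow3 n a) 0 (n - j).
Definition dco n a (j : nat) : C := ent (mpow4 n a) 0 (n - j).

Definition alpha n (a : nat -> C) : R := \sum_(1 <= j < n.+1) cabs (a j) ^+ 2.
Definition beta n a : R := \sum_(1 <= j < n.+1) cabs (bco n a j) ^+ 2.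
Definition gamma n a : C := - \sum_(1 <= j < n.+1) bco n a j * cconj (a j).
Definition delta n a : R :=
  (alpha n a + beta n a
   + Num.sqrt ((alpha n a - beta n a) ^+ 2 + 4 * cabs (gamma n a) ^+ 2)) / 2.

Definition alpha' n (a : nat -> C) : R := \sum_(3 <= j < n.+1) cabs (a j) ^+ 2.
Definition beta' n a : R := \sum_(3 <= j < n.+1) cabs (bco n a j) ^+ 2.
Definition gamma' n a : C := - \sum_(3 <= j < n.+1) cconj (a j) * bco n a j.
Definition delta' n a : R :=
  (alpha' n a + beta' n a
   + Num.sqrt ((alpha' n a - beta' n a) ^+ 2 + 4 * cabs (gamma' n a) ^+ 2)) / 2.

Definition alpha1 n a : R := \sum_(1 <= j < n.+1) cabs (dco n a j) ^+ 2.
Definition beta1 n a : R := \sum_(1 <= j < n.+1) cabs (cco n a j) ^+ 2.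
Definition gamma1 n a : C := \sum_(1 <= j < n.+1) dco n a j * cconj (cco n a j).
Definition delta1 n a : R :=
  (alpha1 n a + beta1 n a
   + Num.sqrt ((alpha1 n a - beta1 n a) ^+ 2 + 4 * cabs (gamma1 n a) ^+ 2)) / 2.

Definition gamma2 n a : C := \sum_(1 <= j < n.+1) dco n a j * cconj (bco n a j).
Definition gamma3 n a : C := \sum_(1 <= j < n.+1) dco n a j * cconj (a j).
Definition gamma4 n a : C := \sum_(1 <= j < n.+1) cco n a j * cconj (bco n a j).
Definition gamma5 n a : C := \sum_(1 <= j < n.+1) cco n a j * cconj (a j).
Definition delta2 n a : R :=
  let g2 := cabs (gamma2 n a) ^+ 2 in
  let g3 := cabs (gamma3 n a) ^+ 2 in
  let g4 := cabs (gamma4 n a) ^+ 2 in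
  let g5 := cabs (gamma5 n a) ^+ 2 in
  (g2 + g3 + g4 + g5
   + Num.sqrt (((g2 + g3) - (g4 + g5)) ^+ 2
       + 4 * cabs (gamma2 n a * cconj (gamma4 n a)
                   + gamma3 n a * cconj (gamma5 n a)) ^+ 2)) / 2.

Definition monpoly n (a : nat -> C) : {poly C} :=
  'X^n + \sum_(1 <= j < n.+1) (a j)%:P * 'X^(j.-1).

End Defs.

From HB Require Import structures.
From mathcomp Require Import all_boot all_order all_algebra.
From mathcomp Require Import complex.
From mathcomp Require Import ring lra zify.
Import Order.TTheory GRing.Theory Num.Theory.
Local Open Scope ring_scope.
Local Open Scope complex_scope.
Set Implicit Arguments. Unset Strict Implicit.

(* The vector (z^(n-1), ..., z, 1)^T is an eigenvector of C_p, so the first rows of C_p,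
   C_p^2, C_p^3, C_p^4 pair with (z^(j-1))_j to -z^n, z^(n+1), z^(n+2), z^(n+3).  Weighting
   two such rows by the conjugates of these powers gives a vector g whose pairing with
   (z^(j-1))_j is a positive real T.  By Cauchy-Schwarz, T <= lam * sum_j |z|^(2(j-1)) as
   soon as |g|^2 <= lam * T, and |g|^2 is controlled by largest eigenvalues of 2 x 2 Gram
   matrices, which is what the deltas are.  One choice of g gives
   |z|^4 <= lmax2 delta 1 delta', another |z|^8 <= lmax2 delta1 delta delta2 + 1; so |z|^4
   lies below both bounds of the statement, hence below their convex combination. *)

Section RealBounds.
Variable R : rcfType.
Implicit Types A B G s t X : R.

(* The largest eigenvalue of the Hermitian matrix [[A, c], [c^*, B]] with |c|^2 = G. *)
Definition lmax2 A B G : R := (A + B + Num.sqrt ((A - B) ^+ 2 + 4 * G)) / 2.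

Lemma lmax2C A B G : lmax2 A B G = lmax2 B A G.
Proof. by rewrite /lmax2 (addrC B) -sqrrN opprB. Qed.

Lemma lmax2P A B G : 0 <= G ->
  [/\ A <= lmax2 A B G, B <= lmax2 A B G
    & (lmax2 A B G - A) * (lmax2 A B G - B) = G].
Proof.
move=> G_ge0; rewrite /lmax2.
have D_ge0 : 0 <= (A - B) ^+ 2 + 4 * G by rewrite addr_ge0 ?sqr_ge0 ?mulr_ge0.
have := sqr_sqrtr D_ge0; have := sqrtr_ge0 ((A - B) ^+ 2 + 4 * G).
set S := Num.sqrt _ => S_ge0 S2.
have : `|A - B| <= S.
  by rewrite -(ler_pXn2r (n:=2)) ?nnegrE ?normr_ge0 // real_normK ?num_real // S2 lerDl mulr_ge0.
by rewrite ler_norml => /andP[? ?]; split; lra.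
Qed.

Lemma lmax2_ge0 A B G : 0 <= B -> 0 <= G -> 0 <= lmax2 A B G.
Proof. by move=> B_ge0 /(lmax2P A B) [_ leB _]; apply: le_trans leB. Qed.

Lemma lmax2_quad_le A B G s t X : 0 <= G -> 0 <= s -> 0 <= t ->
  X ^+ 2 <= G * s * t -> A * s + B * t + 2 * X <= lmax2 A B G * (s + t).
Proof.
move=> G_ge0 s_ge0 t_ge0 X2_le; have [leA leB gap] := lmax2P A B G_ge0.
set u := lmax2 A B G - A in gap; set v := lmax2 A B G - B in gap.
suff : 2 * X <= u * s + v * t by rewrite /u /v; lra.
have us_ge0 : 0 <= u * s by rewrite mulr_ge0 // subr_ge0.
have vt_ge0 : 0 <= v * t by rewrite mulr_ge0 // subr_ge0.
have [X_le0|X_gt0] := lerP X 0; first lra.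
rewrite -(ler_pXn2r (n:=2)) ?nnegrE ?addr_ge0 // ?mulr_ge0 //; last by lra.
have : X ^+ 2 <= (u * s) * (v * t) by rewrite mulrACA gap mulrA.
move: (u * s) (v * t) us_ge0 vt_ge0 => p q _ _ le_pq.
rewrite -subr_ge0 (_ : _ - _ = (p - q) ^+ 2 + 4 * (p * q - X ^+ 2)); last by ring.
by rewrite addr_ge0 ?sqr_ge0 // mulr_ge0 // subr_ge0.
Qed.

Lemma ler_sqrt_of_sqr (x y : R) : 0 <= x -> x ^+ 2 <= y -> x <= Num.sqrt y.
Proof. by move=> x_ge0 le_xy; rewrite -(ger0_norm x_ge0) -sqrtr_sqr ler_wsqrtr. Qed.

End RealBounds.

Lemma Cauchy_Schwarz_real (R : realDomainType) (I : Type) (r : seq I) (f g : I -> R) :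
  (\sum_(j <- r) f j * g j) ^+ 2 <= (\sum_(j <- r) f j ^+ 2) * (\sum_(j <- r) g j ^+ 2).
Proof.
elim: r => [|x r IHr]; first by rewrite !big_nil expr0n mul0r.
rewrite !big_cons; move: IHr.
set S := \sum_(j <- r) _ * _; set F := \sum_(j <- r) _ ^+ 2; set G := \sum_(j <- r) _ ^+ 2.
have F_ge0 : 0 <= F by rewrite sumr_ge0 // => j _; rewrite sqr_ge0.
have G_ge0 : 0 <= G by rewrite sumr_ge0 // => j _; rewrite sqr_ge0.
move: (f x) (g x) => a b IHr.
have cross : 2 * (a * b) * S <= a ^+ 2 * G + b ^+ 2 * F.
  have RHS_ge0 : 0 <= a ^+ 2 * G + b ^+ 2 * F by rewrite addr_ge0 // mulr_ge0 // sqr_ge0.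
  have [|S_pos] := lerP (2 * (a * b) * S) 0; first lra.
  rewrite -(ler_pXn2r (n:=2)) ?nnegrE ?(ltW S_pos) //.
  have le_S : (a * b) ^+ 2 * S ^+ 2 <= (a * b) ^+ 2 * (F * G) by rewrite ler_wpM2l ?sqr_ge0.
  rewrite -subr_ge0 (_ : _ - _ = (a ^+ 2 * G - b ^+ 2 * F) ^+ 2
    + 4 * ((a * b) ^+ 2 * (F * G) - (a * b) ^+ 2 * S ^+ 2)); last by ring.
  by rewrite addr_ge0 ?sqr_ge0 // mulr_ge0 // subr_ge0.
nra.
Qed.

Section Modulus.
Variable R : rcfType.
Implicit Types u v : R[i].

Lemma cabs_ge0 u : 0 <= cabs u.
Proof. by case: u => a b; apply: sqrtr_ge0. Qed.

Lemma cabs_sqr u : cabs u ^+ 2 = complex.Re u ^+ 2 + complex.Im u ^+ 2.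
Proof. by case: u => a b; rewrite /cabs /= sqr_sqrtr // addr_ge0 ?sqr_ge0. Qed.

Lemma cabs_real (x : R) : 0 <= x -> cabs x%:C = x.
Proof. by move=> x_ge0; rewrite /cabs /= expr0n /= addr0 sqrtr_sqr ger0_norm. Qed.

Lemma cabs0 : cabs (0 : R[i]) = 0.
Proof. exact: Normc.normc0. Qed.

Lemma cabsM u v : cabs (u * v) = cabs u * cabs v.
Proof. exact: Normc.normcM. Qed.

Lemma cabsN u : cabs (- u) = cabs u.
Proof. exact: normcN. Qed.

Lemma cabsJ u : cabs (conjc u) = cabs u.
Proof. by case: u => a b; rewrite /cabs /= sqrrN. Qed.

Lemma cabsX u m : cabs (u ^+ m) = cabs u ^+ m.
Proof.
elim: m => [|m IHm]; first by rewrite !expr0 /cabs Normc.normc1.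
by rewrite !exprS cabsM IHm.
Qed.

Lemma cabsD_le u v : cabs (u + v) <= cabs u + cabs v.
Proof. exact: le_normcD. Qed.

Lemma cabsD_sqr u v :
  cabs (u + v) ^+ 2 = cabs u ^+ 2 + cabs v ^+ 2 + 2 * complex.Re (u * conjc v).
Proof. by case: u => a b; case: v => c d; rewrite !cabs_sqr /=; ring. Qed.

Lemma Re_sqr_le u : complex.Re u ^+ 2 <= cabs u ^+ 2.
Proof. by rewrite cabs_sqr lerDl sqr_ge0. Qed.

Lemma mulcJ_sqr u : u * conjc u = (cabs u ^+ 2)%:C.
Proof. by case: u => a b; apply/eqP; rewrite cabs_sqr eq_complex /=; apply/andP; split; apply/eqP; ring. Qed.

End Modulus.

Section FiniteSums.
Variables (R : rcfType) (I : Type) (r : seq I).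
Implicit Types (f g w : I -> R[i]) (y : R[i]).

Definition sqnorm f : R := \sum_(j <- r) cabs (f j) ^+ 2.
Definition dotc f g : R[i] := \sum_(j <- r) f j * conjc (g j).

Lemma sqnorm_ge0 f : 0 <= sqnorm f.
Proof. by rewrite sumr_ge0 // => j _; rewrite sqr_ge0. Qed.

Lemma Re_sum (F : I -> R[i]) : complex.Re (\sum_(j <- r) F j) = \sum_(j <- r) complex.Re (F j).
Proof. by apply: big_morph => [[? ?] [? ?]|]. Qed.

Lemma sqnormD f g :
  sqnorm (fun j => f j + g j) = sqnorm f + sqnorm g + 2 * complex.Re (dotc f g).
Proof.
rewrite /sqnorm /dotc Re_sum mulr_sumr -!big_split.
by apply: eq_bigr => j _; rewrite cabsD_sqr.
Qed.

Lemma sqnormZ y f : sqnorm (fun j => y * f j) = cabs y ^+ 2 * sqnorm f.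
Proof. by rewrite /sqnorm mulr_sumr; apply: eq_bigr => j _; rewrite cabsM exprMn. Qed.

Lemma dotcZ y1 y2 f g : dotc (fun j => y1 * f j) (fun j => y2 * g j) = y1 * conjc y2 * dotc f g.
Proof. by rewrite /dotc mulr_sumr; apply: eq_bigr => j _; rewrite rmorphM /=; ring. Qed.

Lemma dotcDl f1 f2 g : dotc (fun j => f1 j + f2 j) g = dotc f1 g + dotc f2 g.
Proof. by rewrite /dotc -big_split; apply: eq_bigr => j _; rewrite mulrDl. Qed.

Lemma dotcDr f g1 g2 : dotc f (fun j => g1 j + g2 j) = dotc f g1 + dotc f g2.
Proof. by rewrite /dotc -big_split; apply: eq_bigr => j _; rewrite rmorphD mulrDr. Qed.

Lemma Cauchy_Schwarz f g : cabs (\sum_(j <- r) f j * g j) ^+ 2 <= sqnorm f * sqnorm g.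
Proof.
rewrite /sqnorm; apply: le_trans (Cauchy_Schwarz_real r (fun j => cabs (f j)) (fun j => cabs (g j))).
rewrite ler_pXn2r ?nnegrE ?cabs_ge0 ?sumr_ge0 // => [|j _]; last by rewrite mulr_ge0 ?cabs_ge0.
elim: r => [|x s IHs]; first by rewrite !big_nil /cabs Normc.normc0.
by rewrite !big_cons -cabsM (le_trans (cabsD_le _ _)) // lerD2l.
Qed.

Lemma lmax2_gram_ge0 f g : 0 <= lmax2 (sqnorm f) (sqnorm g) (cabs (dotc f g) ^+ 2).
Proof. by apply: lmax2_ge0; [apply: sqnorm_ge0 | apply: sqr_ge0]. Qed.

Lemma sum_mulDl f g w :
  \sum_(j <- r) (f j + g j) * w j = \sum_(j <- r) f j * w j + \sum_(j <- r) g j * w j.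
Proof. by rewrite -big_split; apply: eq_bigr => j _; rewrite mulrDl. Qed.

Lemma sqnormD_le f g A B G s t :
  0 <= G -> 0 <= s -> 0 <= t ->
  sqnorm f <= A * s -> sqnorm g <= B * t ->
  complex.Re (dotc f g) ^+ 2 <= G * s * t ->
  sqnorm (fun j => f j + g j) <= lmax2 A B G * (s + t).
Proof.
move=> G_ge0 s_ge0 t_ge0 le_f le_g le_fg; rewrite sqnormD.
by apply: le_trans (lmax2_quad_le A B G_ge0 s_ge0 t_ge0 le_fg); lra.
Qed.

Lemma sqnorm_comb_le y1 y2 f g :
  sqnorm (fun j => y1 * f j + y2 * g j)
  <= lmax2 (sqnorm f) (sqnorm g) (cabs (dotc f g) ^+ 2) * (cabs y1 ^+ 2 + cabs y2 ^+ 2).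
Proof.
apply: sqnormD_le; rewrite ?sqr_ge0 ?sqnormZ ?dotcZ 1?mulrC //.
apply: le_trans (Re_sqr_le _) _.
by rewrite !cabsM cabsJ !exprMn mulrA.
Qed.

Lemma sqnorm_dual_le g w (T lam : R) :
  \sum_(j <- r) g j * w j = T%:C -> 0 <= T -> 0 <= lam ->
  sqnorm g <= lam * T -> T <= lam * sqnorm w.
Proof.
move=> gw T_ge0 lam_ge0 le_g.
have := Cauchy_Schwarz g w; rewrite gw cabs_real // => CS.
have [T_le0|T_gt0] := lerP T 0; first by rewrite (le_trans T_le0) // mulr_ge0 ?sqnorm_ge0.
rewrite -(ler_pM2l T_gt0) -expr2 (le_trans CS) // mulrCA mulrA ler_wpM2r ?sqnorm_ge0 // mulrC.
Qed.

Lemma sum_conj_comb f g w u v :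
  \sum_(j <- r) f j * w j = u -> \sum_(j <- r) g j * w j = v ->
  \sum_(j <- r) (conjc u * f j + conjc v * g j) * w j = (cabs u ^+ 2 + cabs v ^+ 2)%:C.
Proof.
move=> fw gw; rewrite (eq_bigr (fun j => conjc u * (f j * w j) + conjc v * (g j * w j))) => [|j _].
  by rewrite big_split -!mulr_sumr fw gw !(mulrC (conjc _)) !mulcJ_sqr rmorphD.
by rewrite mulrDl !mulrA.
Qed.

(* Over [[:: true; false]], dotc_row d b a and dotc_row c b a are the rows
   (gamma_2, gamma_3) and (gamma_4, gamma_5) of the statement. *)
Definition dotc_row f g1 g2 (i : bool) : R[i] := if i then dotc f g1 else dotc f g2.

Lemma dotc_comb2 y1 y2 u v f1 f2 g1 g2 :
  dotc (fun j => y1 * f1 j + y2 * f2 j) (fun j => conjc u * g1 j + conjc v * g2 j)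
  = \sum_(i <- [:: true; false])
      (y1 * dotc_row f1 g1 g2 i + y2 * dotc_row f2 g1 g2 i) * (if i then u else v).
Proof.
by rewrite dotcDl !dotcDr !dotcZ !conjcK !big_cons big_nil /=; ring.
Qed.

End FiniteSums.

Lemma sqnorm_pair (R : rcfType) (x y : R[i]) :
  sqnorm [:: true; false] (fun i => if i then x else y) = cabs x ^+ 2 + cabs y ^+ 2.
Proof. by rewrite /sqnorm !big_cons big_nil addr0. Qed.

Section GeometricSums.
Variable R : realDomainType.
Implicit Types q : R.

Lemma sum_expr_shift q k n :
  q ^+ k * \sum_(0 <= i < n) q ^+ i = \sum_(k <= i < n + k) q ^+ i.
Proof.
rewrite -{2}(add0n k) big_addn addnK mulr_sumr.
by apply: eq_bigr => i _; rewrite -exprD addnC.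
Qed.

Lemma sum_expr_gt0 q n : (0 < n)%N -> 0 <= q -> 0 < \sum_(0 <= i < n) q ^+ i.
Proof.
move=> n_gt0 q_ge0; rewrite big_ltn // expr0 (lt_le_trans ltr01) // lerDl.
by rewrite sumr_ge0 // => i _; rewrite exprn_ge0.
Qed.

Lemma sqr_mul_sum_expr q n : (2 <= n)%N ->
  q ^+ 2 * \sum_(0 <= i < n) q ^+ i = q ^+ n.+1 + q ^+ n + \sum_(2 <= i < n) q ^+ i.
Proof. by move=> n_ge2; rewrite sum_expr_shift addn2 !big_nat_recr //=; [ring | lia]. Qed.

Lemma expr4_mul_sum_expr_le q n : 0 <= q ->
  q ^+ 4 * \sum_(0 <= i < n) q ^+ i
  <= q ^+ n.+3 + q ^+ n.+2 + q ^+ n.+1 + q ^+ n + \sum_(0 <= i < n) q ^+ i.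
Proof.
move=> q_ge0; rewrite sum_expr_shift.
apply: (@le_trans _ _ (\sum_(0 <= i < n + 4) q ^+ i)).
  have -> : \sum_(0 <= i < n + 4) q ^+ i
           = \sum_(0 <= i < 4) q ^+ i + \sum_(4 <= i < n + 4) q ^+ i.
    by rewrite -big_cat_nat ?leq_addl.
  by rewrite lerDr sumr_ge0 // => i _; rewrite exprn_ge0.
by rewrite addn4 !big_nat_recr //=; lra.
Qed.

End GeometricSums.

Lemma big_nat_drop (V : nmodType) m k n (F : nat -> V) : (m <= k <= n)%N ->
  (forall j, (j < k)%N -> F j = 0) -> \sum_(m <= j < n) F j = \sum_(k <= j < n) F j.
Proof.
case/andP=> le_mk le_kn F0; rewrite (@big_cat_nat _ _ _ k) //= big_nat_cond big1 ?add0r //.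
by move=> j /andP[/andP[_ lt_jk] _]; apply: F0.
Qed.

Lemma big_nat1_rev (V : nmodType) n (F : nat -> V) :
  \sum_(1 <= j < n.+1) F j = \sum_(i < n) F (n - i)%N.
Proof.
rewrite big_add1 /= big_mkord (reindex_inj rev_ord_inj) /=.
by apply: eq_bigr => i _; congr F; have := ltn_ord i; lia.
Qed.

Section Companion.
Variable R : rcfType.
Implicit Types (n : nat) (a : nat -> R[i]) (z : R[i]).

Lemma entE n (M : 'M[R[i]]_n) i j (lt_i : (i < n)%N) (lt_j : (j < n)%N) :
  ent M i j = M (Ordinal lt_i) (Ordinal lt_j).
Proof. by rewrite /ent (insubT (fun k => k < n)%N lt_i) (insubT (fun k => k < n)%N lt_j). Qed.

Lemma monpoly_root n a z : root (monpoly n a) z ->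
  \sum_(1 <= j < n.+1) a j * z ^+ j.-1 = - z ^+ n.
Proof.
rewrite /root /monpoly hornerD hornerXn horner_sum addrC addr_eq0 => /eqP <-.
by apply: eq_bigr => j _; rewrite hornerCM hornerXn.
Qed.

Definition powcol n z : 'cV[R[i]]_n := \col_(i < n) z ^+ (n.-1 - i).

Lemma compmx_eigen n a z : root (monpoly n a) z ->
  compmx n a *m powcol n z = z *: powcol n z.
Proof.
move=> pz0; apply/matrixP => i k; rewrite !mxE ord1.
case: i => [[|i] lt_i] /=.
  rewrite subn0 -exprS prednK // -[RHS]opprK -(monpoly_root pz0) big_nat1_rev -sumrN.
  apply: eq_bigr => j _; rewrite !mxE /= mulNr; have := ltn_ord j.
  by move=> lt_j; congr (- (a _ * z ^+ _)); lia.
rewrite (bigD1 (Ordinal (ltnW lt_i))) //= big1 => [|j ne_j]; rewrite !mxE /=.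
  by rewrite eqxx mul1r addr0 -exprS; congr (_ ^+ _); lia.
have ne_ij : i != j by apply: contraNneq ne_j => ij; apply/eqP/val_inj; rewrite /= ij.
by rewrite eqSS (negbTE ne_ij) mul0r.
Qed.

Lemma first_row_eigen n (M : 'M[R[i]]_n) z k : (0 < n)%N ->
  M *m powcol n z = z ^+ k *: powcol n z ->
  \sum_(1 <= j < n.+1) ent M 0 (n - j) * z ^+ j.-1 = z ^+ (n.-1 + k).
Proof.
move=> n_gt0 /matrixP /(_ (Ordinal n_gt0) 0); rewrite !mxE subn0 => eq0.
rewrite big_nat1_rev exprD mulrC -eq0; apply: eq_bigr => i _.
have lt_ni : (n - (n - i) < n)%N by have := ltn_ord i; lia.
rewrite (entE _ n_gt0 lt_ni) mxE (_ : Ordinal lt_ni = i); last by apply: ord_inj => /=; lia.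
by congr (_ * z ^+ _); have := ltn_ord i; lia.
Qed.

Lemma companion_row_sums n a z : (0 < n)%N -> root (monpoly n a) z ->
  [/\ \sum_(1 <= j < n.+1) a j * z ^+ j.-1 = - z ^+ n,
      \sum_(1 <= j < n.+1) bco n a j * z ^+ j.-1 = z ^+ n.+1,
      \sum_(1 <= j < n.+1) cco n a j * z ^+ j.-1 = z ^+ n.+2 &
      \sum_(1 <= j < n.+1) dco n a j * z ^+ j.-1 = z ^+ n.+3].
Proof.
move=> n_gt0 pz0; have C1 := compmx_eigen pz0.
have eigenS k M : M *m powcol n z = z ^+ k *: powcol n z ->
    M *m compmx n a *m powcol n z = z ^+ k.+1 *: powcol n z.
  by move=> eqM; rewrite -mulmxA C1 -scalemxAr eqM scalerA -exprS.
have C2 : mpow2 n a *m powcol n z = z ^+ 2 *: powcol n z by apply: eigenS; rewrite C1 expr1.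
have C3 : mpow3 n a *m powcol n z = z ^+ 3 *: powcol n z by apply: eigenS.
have C4 : mpow4 n a *m powcol n z = z ^+ 4 *: powcol n z by apply: eigenS.
split; first exact: monpoly_root.
- by rewrite /bco (first_row_eigen n_gt0 C2); congr (_ ^+ _); lia.
- by rewrite /cco (first_row_eigen n_gt0 C3); congr (_ ^+ _); lia.
- by rewrite /dco (first_row_eigen n_gt0 C4); congr (_ ^+ _); lia.
Qed.

End Companion.

Section GramForms.
Variables (R : rcfType) (n : nat) (a : nat -> R[i]).
Local Notation r1 := (index_iota 1 n.+1).
Local Notation r3 := (index_iota 3 n.+1).

Lemma delta_lmax2 : delta n a =
  lmax2 (sqnorm r1 (bco n a)) (sqnorm r1 a) (cabs (dotc r1 (bco n a) a) ^+ 2).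
Proof. by rewrite lmax2C /delta /gamma /cabs normcN. Qed.

Lemma delta'_lmax2 : delta' n a =
  lmax2 (sqnorm r3 (bco n a)) (sqnorm r3 a) (cabs (dotc r3 (bco n a) a) ^+ 2).
Proof.
rewrite lmax2C /delta' /gamma' /cabs normcN /dotc.
by under eq_bigr do rewrite mulrC.
Qed.

Lemma delta1_lmax2 : delta1 n a =
  lmax2 (sqnorm r1 (dco n a)) (sqnorm r1 (cco n a)) (cabs (dotc r1 (dco n a) (cco n a)) ^+ 2).
Proof. by []. Qed.

Lemma lmax2_pairs (x1 x2 y1 y2 : R[i]) :
  let gd i := if i then x1 else x2 in
  let gc i := if i then y1 else y2 in
  lmax2 (sqnorm [:: true; false] gd) (sqnorm [:: true; false] gc)
        (cabs (dotc [:: true; false] gd gc) ^+ 2)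
  = (cabs x1 ^+ 2 + cabs x2 ^+ 2 + cabs y1 ^+ 2 + cabs y2 ^+ 2
     + Num.sqrt ((cabs x1 ^+ 2 + cabs x2 ^+ 2 - (cabs y1 ^+ 2 + cabs y2 ^+ 2)) ^+ 2
                 + 4 * cabs (x1 * conjc y1 + x2 * conjc y2) ^+ 2)) / 2.
Proof. by rewrite /sqnorm /dotc !big_cons !big_nil !addr0 /lmax2 !addrA. Qed.

Lemma delta2_lmax2 : delta2 n a =
  lmax2 (sqnorm [:: true; false] (dotc_row r1 (dco n a) (bco n a) a))
        (sqnorm [:: true; false] (dotc_row r1 (cco n a) (bco n a) a))
        (cabs (dotc [:: true; false] (dotc_row r1 (dco n a) (bco n a) a)
                                     (dotc_row r1 (cco n a) (bco n a) a)) ^+ 2).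
Proof. exact: esym (lmax2_pairs (gamma2 n a) (gamma3 n a) (gamma4 n a) (gamma5 n a)). Qed.

End GramForms.

Section RootBounds.
Variables (R : rcfType) (n : nat) (z : R[i]).
Local Notation r1 := (index_iota 1 n.+1).
Local Notation r3 := (index_iota 3 n.+1).
Local Notation q := (cabs z ^+ 2).

Lemma cabsX_sqr k : cabs (z ^+ k) ^+ 2 = q ^+ k.
Proof. by rewrite cabsX exprAC. Qed.

Lemma sqnorm_powers k : sqnorm (index_iota k.+1 n.+1) (fun j => z ^+ j.-1) = \sum_(k <= i < n) q ^+ i.
Proof. by rewrite /sqnorm big_add1; apply: eq_bigr => i _; rewrite cabsX_sqr. Qed.

Definition trunc_conj k (j : nat) : R[i] := if (k <= j)%N then conjc (z ^+ j.-1) else 0.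

Lemma trunc_conj0 k j : (j < k)%N -> trunc_conj k j = 0.
Proof. by rewrite /trunc_conj ltnNge => /negbTE ->. Qed.

Section Truncation.
Variable k : nat.
Hypothesis k_bounds : (1 <= k <= n.+1)%N.

Lemma sum_trunc_conj :
  \sum_(j <- r1) trunc_conj k j * z ^+ j.-1 = (sqnorm (index_iota k n.+1) (fun j => z ^+ j.-1))%:C.
Proof.
rewrite (big_nat_drop k_bounds) => [|j /trunc_conj0 ->]; last by rewrite mul0r.
rewrite /sqnorm rmorph_sum; apply: eq_big_nat => j /andP[le_kj _].
by rewrite /trunc_conj le_kj mulrC mulcJ_sqr.
Qed.

Lemma sqnorm_trunc_conj :
  sqnorm r1 (trunc_conj k) = sqnorm (index_iota k n.+1) (fun j => z ^+ j.-1).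
Proof.
rewrite /sqnorm (big_nat_drop k_bounds) => [|j /trunc_conj0 ->]; last by rewrite cabs0 expr0n.
by apply: eq_big_nat => j /andP[le_kj _]; rewrite /trunc_conj le_kj cabsJ.
Qed.

Lemma dotc_trunc_conj g :
  dotc r1 g (trunc_conj k) = \sum_(j <- index_iota k n.+1) g j * z ^+ j.-1.
Proof.
rewrite /dotc (big_nat_drop k_bounds) => [|j /trunc_conj0 ->]; last by rewrite conjc0 mulr0.
by apply: eq_big_nat => j /andP[le_kj _]; rewrite /trunc_conj le_kj conjcK.
Qed.

End Truncation.

Variables (a b c d : nat -> R[i]).
Hypotheses (n_ge2 : (2 <= n)%N)
  (row_a : \sum_(j <- r1) a j * z ^+ j.-1 = - z ^+ n)
  (row_b : \sum_(j <- r1) b j * z ^+ j.-1 = z ^+ n.+1)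
  (row_c : \sum_(j <- r1) c j * z ^+ j.-1 = z ^+ n.+2)
  (row_d : \sum_(j <- r1) d j * z ^+ j.-1 = z ^+ n.+3).

Lemma sqr_cabs_root_le :
  q ^+ 2 <= lmax2 (lmax2 (sqnorm r1 b) (sqnorm r1 a) (cabs (dotc r1 b a) ^+ 2)) 1
                  (lmax2 (sqnorm r3 b) (sqnorm r3 a) (cabs (dotc r3 b a) ^+ 2)).
Proof.
(* The conjugate tail trunc_conj 3 adds sum_(2 <= i < n) q^i to the pairing P, which
   makes it q^2 * sum_(0 <= i < n) q^i. *)
pose g j := conjc (z ^+ n.+1) * b j + conjc (- z ^+ n) * a j.
have le13 : (1 <= 3 <= n.+1)%N by lia.
set P := q ^+ n.+1 + q ^+ n; set N := sqnorm r3 (fun j => z ^+ j.-1).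
set d' := lmax2 (sqnorm r3 b) _ _; set lam := lmax2 _ 1 d'.
have gw : \sum_(j <- r1) g j * z ^+ j.-1 = P%:C.
  by rewrite (sum_conj_comb row_b row_a) cabsN !cabsX_sqr.
have le_g r : sqnorm r g <= lmax2 (sqnorm r b) (sqnorm r a) (cabs (dotc r b a) ^+ 2) * P.
  by apply: le_trans (sqnorm_comb_le _ _ _ _ _) _; rewrite !cabsJ cabsN !cabsX_sqr.
have le_gh : complex.Re (dotc r1 g (trunc_conj 3)) ^+ 2 <= d' * P * N.
  rewrite dotc_trunc_conj //; apply: le_trans (Re_sqr_le _) _.
  by apply: le_trans (Cauchy_Schwarz _ _ _) _; rewrite ler_wpM2r ?sqnorm_ge0.
have d'_ge0 : 0 <= d' := lmax2_gram_ge0 _ _ _.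
have q_ge0 : 0 <= q := sqr_ge0 _.
have P_ge0 : 0 <= P by apply: addr_ge0; apply: exprn_ge0.
have N_ge0 : 0 <= N := sqnorm_ge0 _ _.
have ghw : \sum_(j <- r1) (g j + trunc_conj 3 j) * z ^+ j.-1 = (P + N)%:C.
  by rewrite sum_mulDl gw sum_trunc_conj // -rmorphD.
have le_gh2 : sqnorm r1 (fun j => g j + trunc_conj 3 j) <= lam * (P + N).
  by apply: sqnormD_le; rewrite ?le_g ?sqnorm_trunc_conj ?mul1r.
have := sqnorm_dual_le ghw (addr_ge0 P_ge0 N_ge0) (lmax2_ge0 _ ler01 d'_ge0) le_gh2.
rewrite /P /N !sqnorm_powers -sqr_mul_sum_expr // ler_pM2r // sum_expr_gt0 //; lia.
Qed.

Local Notation pair := [:: true; false].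

Lemma expr4_cabs_root_le :
  q ^+ 4 <= lmax2 (lmax2 (sqnorm r1 d) (sqnorm r1 c) (cabs (dotc r1 d c) ^+ 2))
                  (lmax2 (sqnorm r1 b) (sqnorm r1 a) (cabs (dotc r1 b a) ^+ 2))
                  (lmax2 (sqnorm pair (dotc_row r1 d b a)) (sqnorm pair (dotc_row r1 c b a))
                         (cabs (dotc pair (dotc_row r1 d b a) (dotc_row r1 c b a)) ^+ 2)) + 1.
Proof.
(* The pairing s1 + s2 holds the four top terms of q^4 * sum_(0 <= i < n) q^i; the other
   terms are bounded by sum_(0 <= i < n) q^i itself. *)
pose g1 j := conjc (z ^+ n.+3) * d j + conjc (z ^+ n.+2) * c j.
pose g2 j := conjc (z ^+ n.+1) * b j + conjc (- z ^+ n) * a j.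
set s1 := q ^+ n.+3 + q ^+ n.+2; set s2 := q ^+ n.+1 + q ^+ n.
set l1 := lmax2 (sqnorm r1 d) _ _; set l := lmax2 (sqnorm r1 b) _ _.
set l2 := lmax2 (sqnorm pair _) _ _.
have g1w : \sum_(j <- r1) g1 j * z ^+ j.-1 = s1%:C.
  by rewrite (sum_conj_comb row_d row_c) !cabsX_sqr.
have g2w : \sum_(j <- r1) g2 j * z ^+ j.-1 = s2%:C.
  by rewrite (sum_conj_comb row_b row_a) cabsN !cabsX_sqr.
have le_g1 : sqnorm r1 g1 <= l1 * s1.
  by apply: le_trans (sqnorm_comb_le _ _ _ _ _) _; rewrite !cabsJ !cabsX_sqr.
have le_g2 : sqnorm r1 g2 <= l * s2.
  by apply: le_trans (sqnorm_comb_le _ _ _ _ _) _; rewrite !cabsJ cabsN !cabsX_sqr.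
have q_ge0 : 0 <= q := sqr_ge0 _.
have s1_ge0 : 0 <= s1 by apply: addr_ge0; apply: exprn_ge0.
have s2_ge0 : 0 <= s2 by apply: addr_ge0; apply: exprn_ge0.
have l2_ge0 : 0 <= l2 := lmax2_gram_ge0 _ _ _.
have le_g12 : complex.Re (dotc r1 g1 g2) ^+ 2 <= l2 * s1 * s2.
  rewrite dotc_comb2; apply: le_trans (Re_sqr_le _) _.
  apply: le_trans (Cauchy_Schwarz _ _ _) _; rewrite sqnorm_pair cabsN !cabsX_sqr.
  rewrite ler_wpM2r //; apply: le_trans (sqnorm_comb_le _ _ _ _ _) _.
  by rewrite !cabsJ !cabsX_sqr.
have g12w : \sum_(j <- r1) (g1 j + g2 j) * z ^+ j.-1 = (s1 + s2)%:C.
  by rewrite sum_mulDl g1w g2w -rmorphD.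
have := sqnorm_dual_le g12w (addr_ge0 s1_ge0 s2_ge0) (lmax2_ge0 _ (lmax2_gram_ge0 _ _ _) l2_ge0)
  (sqnormD_le l2_ge0 s1_ge0 s2_ge0 le_g1 le_g2 le_g12).
rewrite (sqnorm_powers 0) /s1 /s2 => le_s.
have S_gt0 : 0 < \sum_(0 <= i < n) q ^+ i by rewrite sum_expr_gt0 //; lia.
by rewrite -(ler_pM2r S_gt0) mulrDl mul1r (le_trans (expr4_mul_sum_expr_le _ _)) //; lra.
Qed.

End RootBounds.

Theorem mainTheorem13 (R : rcfType) (n : nat) (a : nat -> R[i]) (z : R[i]) :
  (2 <= n)%N -> a 1%N != 0 -> root (monpoly n a) z ->
  cabs z <=
    Num.sqrt (Num.sqrt (
      (1 / 4) * ((delta n a + 1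
                  + Num.sqrt ((delta n a - 1) ^+ 2 + 4 * delta' n a)) / 2)
      + (3 / 4) * Num.sqrt ((delta1 n a + delta n a
                  + Num.sqrt ((delta1 n a - delta n a) ^+ 2 + 4 * delta2 n a)) / 2
                  + 1))).
Proof.
move=> n_ge2 _ pz0.
have [row_a row_b row_c row_d] := companion_row_sums (ltnW n_ge2) pz0.
have le_A : (cabs z ^+ 2) ^+ 2 <= lmax2 (delta n a) 1 (delta' n a).
  by rewrite delta_lmax2 delta'_lmax2; apply: sqr_cabs_root_le.
have le_B : (cabs z ^+ 2) ^+ 2 <= Num.sqrt (lmax2 (delta1 n a) (delta n a) (delta2 n a) + 1).
  apply: ler_sqrt_of_sqr; first by rewrite exprn_ge0 ?sqr_ge0.
  by rewrite -exprM delta1_lmax2 delta_lmax2 delta2_lmax2; apply: expr4_cabs_root_le.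
apply: ler_sqrt_of_sqr (cabs_ge0 z) _; apply: ler_sqrt_of_sqr; first exact: sqr_ge0.
by rewrite /lmax2 in le_A le_B; lra.
Qed.
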